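(* Let $k\ge 1$, $b\ge 0$ and $s$ be integers with $1\le s<k$. Then for every integer $t$, $$\sigma_{k}^{(b)}(t;s+1)=\sigma_{k}^{(b)}(t;s)-\sigma_{k}^{(b)}(t-s;s).$$
   Context: For a positive integer $m$, $(q)_m=(1-q)\cdots(1-q^m)$, $(q)_0=1$. For integers $b\ge 0$, $k\ge1$ and $1\le s\le k$, let $R^{(b)}_{k,s}(q)=\sum_{t=0}^{k-1}\sigma^{(b)}_k(t;s)q^t$ be the remainder of $\frac{1}{k^b}(q)_{k-1}^{\,b}(q)_{s-1}$ upon division by $1-q^k$. The values $\sigma^{(b)}_k(t;s)$ are extended to all integers $t$ by $k$-periodicity in $t$. *)

From HB Require Import structures.
From mathcomp Require Import all_boot all_order all_algebra.
Set Implicit Arguments. Unset Strict Implicit. Unset Printing Implicit Defensive.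
Import Order.TTheory GRing.Theory Num.Theory.
Local Open Scope ring_scope.

Definition qpoch (m : nat) : {poly rat} := \prod_(1 <= i < m.+1) (1 - 'X^i).

Definition Rrem (b k s : nat) : {poly rat} :=
  ((k%:R : rat)^-1 ^+ b *: (qpoch k.-1 ^+ b * qpoch s.-1)) %% (1 - 'X^k).

(* sigma^{(b)}_k(t;s), extended k-periodically to integers t. *)
Definition sigma (b k s : nat) (t : int) : rat :=
  (Rrem b k s)`_(absz (t %% (k%:Z))%Z).

From mathcomp Require Import all_boot all_order all_algebra.
From mathcomp Require Import zify ring.
Import GRing.Theory Num.Theory.
Local Open Scope ring_scope.

(* Since (q)_s = (q)_{s-1} (1 - q^s), the product defining R_{k,s+1} is that of
   R_{k,s} minus q^s times it.  Modulo 1 - q^k, multiplication by q is the cyclic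
   shift of the k coefficients of a reduced polynomial, so the coefficients of
   the reduction of q^s R_{k,s} are those of R_{k,s} read s places earlier. *)

Definition cyclic_coef {F : nzSemiRingType} (k : nat) (p : {poly F}) (t : int) : F :=
  p`_(absz (t %% k%:Z)%Z).

Lemma cyclic_coefB (F : nzRingType) (k : nat) (p q : {poly F}) (t : int) :
  cyclic_coef k (p - q) t = cyclic_coef k p t - cyclic_coef k q t.
Proof. exact: coefB. Qed.

Section CyclicShift.

Variables (F : fieldType) (k : nat).
Hypothesis k_gt0 : (0 < k)%N.

Lemma size_1subXn : size (1 - 'X^k : {poly F}) = k.+1.
Proof. by rewrite -opprB size_polyN -polyC1 size_XnsubC. Qed.

Lemma size_modp_1subXn (p : {poly F}) : (size (p %% (1 - 'X^k))%R <= k)%N.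
Proof. by rewrite -ltnS -size_1subXn ltn_modp -size_poly_eq0 size_1subXn. Qed.

Lemma coef_mulX_modp_1subXn (r : {poly F}) (j : nat) :
  (size r <= k)%N -> (j < k)%N ->
  (('X * r) %% (1 - 'X^k))`_j = r`_(if j is j'.+1 then j' else k.-1).
Proof.
move=> /leq_sizeP r_small j_lt_k; set c := r`_k.-1.
have reduced : (size ('X * r + c *: (1 - 'X^k))%R <= k)%N.
  apply/leq_sizeP => i k_le_i.
  rewrite coefD coefXM coefZ coefB coef1 coefXn.
  case: i k_le_i => [|i] k_le_i; first by lia.
  case: (eqVneq i.+1 k) => [ik|ne_ik] /=; first by rewrite /c -ik; ring.
  by rewrite r_small; [ring | lia].
(* Reducing X r modulo 1 - X^k moves its top coefficient c to degree 0. *)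
have -> : 'X * r = (- c%:P) * (1 - 'X^k) + ('X * r + c *: (1 - 'X^k)).
  by rewrite -mul_polyC; ring.
rewrite modp_addl_mul_small ?size_1subXn ?ltnS //.
rewrite coefD coefXM coefZ coefB coef1 coefXn.
by case: j j_lt_k => [|j] j_lt_k /=; rewrite (ltn_eqF j_lt_k) /= /c; ring.
Qed.

Lemma cyclic_coef_mulX_modp (r : {poly F}) (t : int) :
  (size r <= k)%N ->
  cyclic_coef k (('X * r) %% (1 - 'X^k)) t = cyclic_coef k r (t - 1).
Proof.
move=> r_small; rewrite /cyclic_coef.
have k_gt0Z : 0 < k%:Z by lia.
set j := absz (t %% k%:Z)%Z.
have jE : (t %% k%:Z)%Z = j%:Z by rewrite /j abszE ger0_norm // modz_ge0 //; lia.
have j_lt_k : (j < k)%N by have := ltz_pmod t k_gt0Z; rewrite jE; lia.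
rewrite coef_mulX_modp_1subXn // -modzDml jE.
case: j {jE} j_lt_k => [|j] j_lt_k; congr (r`_ _).
  by rewrite -modzDr modz_small; lia.
by rewrite modz_small; lia.
Qed.

Lemma cyclic_coef_mulXn_modp (r : {poly F}) (n : nat) (t : int) :
  (size r <= k)%N ->
  cyclic_coef k (('X^n * r) %% (1 - 'X^k)) t = cyclic_coef k r (t - n%:Z).
Proof.
move=> r_small; elim: n t => [|n IHn] t.
  by rewrite expr0 mul1r modp_small ?size_1subXn ?ltnS // subr0.
rewrite exprS -mulrA -modp_mul cyclic_coef_mulX_modp ?size_modp_1subXn // IHn.
by congr (cyclic_coef _ _ _); lia.
Qed.

End CyclicShift.

Lemma qpochS (m : nat) : qpoch m.+1 = qpoch m * (1 - 'X^(m.+1)).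
Proof. by rewrite /qpoch big_nat_recr. Qed.

Lemma RremS (b k s : nat) : (0 < s)%N ->
  Rrem b k s.+1 = Rrem b k s - ('X^s * Rrem b k s) %% (1 - 'X^k).
Proof.
case: s => [|s] // _; rewrite /Rrem modp_mul -modpN -modpD qpochS.
by rewrite -!mul_polyC; congr (_ %% _); ring.
Qed.

Lemma sigmaE (b k s : nat) : sigma b k s = cyclic_coef k (Rrem b k s).
Proof. by []. Qed.

Theorem theorem2p2 (k b s : nat) :
  (1 <= k)%N -> (1 <= s)%N -> (s < k)%N ->
  forall t : int, sigma b k s.+1 t = sigma b k s t - sigma b k s (t - s%:Z).
Proof.
move=> k_gt0 s_gt0 _ t.
by rewrite !sigmaE RremS // cyclic_coefB cyclic_coef_mulXn_modp ?size_modp_1subXn.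
Qed.
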